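(* Let $X \in \Lambda^2_{14} = \mathfrak{g}_2$. Then there exist a $\mathrm{G}_2$-adapted frame $\mathcal{B} = \{ e_1, \ldots, e_7 \}$ and real numbers $\lambda \geq \mu \geq 0$ such that the matrix $[X]_{\mathcal{B}}$, whose $(i,j)$ entry is $X(e_i,e_j)$, is $$ [X]_{\mathcal{B}} = \begin{pmatrix} \begin{matrix} 0 & - \lambda & 0 \\ \lambda & 0 & 0 \\ 0 & 0 & 0 \end{matrix} & \\ & \begin{matrix} 0 & 0 & 0 & \lambda - \mu \\ 0 & 0 & - \mu & 0 \\ 0 & \mu & 0 & 0 \\ - (\lambda - \mu) & 0 & 0 & 0 \end{matrix} \end{pmatrix}, $$ where all nondisplayed entries are zero. Moreover, exactly three cases occur: (i) if $\lambda = \mu$, then $\lambda = \mu = 0$ and $X = 0$; (ii) if $\lambda > 0$ and $\mu = 0$, then $\operatorname{rank} X = 4$ and $\ker X$ is the associative $3$-plane spanned by $\{ e_3, e_5, e_6 \}$; (iii) if $\lambda > \mu > 0$, then $\operatorname{rank} X = 6$ and $\ker X$ is spanned by $e_3$.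
   Context: Equip $\mathbb{R}^7$ with its standard inner product $\langle \cdot,\cdot\rangle$, standard orientation and standard basis. Let $\varphi = e_{123} - e_{167} - e_{527} - e_{563} - e_{415} - e_{426} - e_{437}$ (where $e_{ijk} = e_i \wedge e_j \wedge e_k$ in the standard basis) and define the cross product $u \times v$ by $\langle u \times v, w \rangle = \varphi(u,v,w)$. A bilinear form $A$ on $\mathbb{R}^7$ is identified with the linear operator $A$ defined by $A(u,v) = \langle A(u), v \rangle$; thus $\Lambda^2 = \Lambda^2(\mathbb{R}^7)$ (skew-symmetric bilinear forms) is identified with $\mathfrak{so}(7)$. The subspace $\Lambda^2_{14} = \mathfrak{g}_2$ is the set of $X \in \Lambda^2$ with $X(v \times w) = X(v) \times w + v \times X(w)$ for all $v,w$ (the Lie algebra of $\mathrm{G}_2$, the stabilizer of $\varphi$ in $\mathrm{GL}(7,\mathbb{R})$). A $\mathrm{G}_2$-adapted frame is an oriented orthonormal basis $\{e_1,\dots,e_7\}$ of $\mathbb{R}^7$ with $e_3 = e_1 \times e_2$, $e_5 = e_1 \times e_4$, $e_6 = e_2 \times e_4$, $e_7 = e_3 \times e_4$. A $3$-dimensional subspace is associative if it is closed under the cross product. *)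

From HB Require Import structures.
From mathcomp Require Import all_boot all_order all_algebra.
Set Implicit Arguments. Unset Strict Implicit. Unset Printing Implicit Defensive.
Import Order.TTheory GRing.Theory Num.Theory.
Local Open Scope ring_scope.

Section G2.
Variable R : rcfType.

(* Vectors of R^7 are row vectors 'rV[R]_7; coordinate n is 1-based (n = 1..7). *)
Definition coord7 (u : 'rV[R]_7) (n : nat) : R := u 0 (inord n.-1).

Definition dot7 (u v : 'rV[R]_7) : R := \sum_(i < 7) u 0 i * v 0 i.

(* e_{ijk}(u,v,w) = det [[u_i u_j u_k];[v_i v_j v_k];[w_i w_j w_k]] *)
Definition e3form (i j k : nat) (u v w : 'rV[R]_7) : R :=
  let c := coord7 in
  c u i * (c v j * c w k - c v k * c w j)
  - c u j * (c v i * c w k - c v k * c w i)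
  + c u k * (c v i * c w j - c v j * c w i).

Definition phi7 (u v w : 'rV[R]_7) : R :=
  e3form 1 2 3 u v w - e3form 1 6 7 u v w - e3form 5 2 7 u v w
  - e3form 5 6 3 u v w - e3form 4 1 5 u v w - e3form 4 2 6 u v w
  - e3form 4 3 7 u v w.

(* standard basis vector e_k, 0-based index *)
Definition stdb (k : 'I_7) : 'rV[R]_7 := delta_mx 0 k.

(* cross product: <u x v, w> = phi(u,v,w); its k-th coordinate is phi(u,v,e_k) *)
Definition cross7 (u v : 'rV[R]_7) : 'rV[R]_7 := \row_k phi7 u v (stdb k).

(* A bilinear form X on R^7 is represented by the matrix M with
   X(u,v) = u *m M *m v^T, i.e. M i j = X(e_i,e_j); the associated operator
   is X(u) = u *m M, so that X(u,v) = <X(u), v>. *)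
Definition skew7 (M : 'M[R]_7) : Prop := M^T = - M.

Definition in_g2 (M : 'M[R]_7) : Prop :=
  skew7 M /\
  forall v w : 'rV[R]_7,
    cross7 v w *m M = cross7 (v *m M) w + cross7 v (w *m M).

(* frame vectors: the rows of B; fv B n is e_n (1-based) *)
Definition fv (B : 'M[R]_7) (n : nat) : 'rV[R]_7 := row (inord n.-1) B.

Definition G2_adapted (B : 'M[R]_7) : Prop :=
  (forall i j : 'I_7, dot7 (row i B) (row j B) = (i == j)%:R) /\
  0 < \det B /\
  fv B 3 = cross7 (fv B 1) (fv B 2) /\
  fv B 5 = cross7 (fv B 1) (fv B 4) /\
  fv B 6 = cross7 (fv B 2) (fv B 4) /\
  fv B 7 = cross7 (fv B 3) (fv B 4).

Definition mx_in_frame (M B : 'M[R]_7) : 'M[R]_7 := B *m M *m B^T.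

(* the normal form of the theorem (0-based indices) *)
Definition g2_normal_form (l m : R) : 'M[R]_7 :=
  \matrix_(i, j)
    match nat_of_ord i, nat_of_ord j with
    | 0%N, 1%N => - l
    | 1%N, 0%N => l
    | 3%N, 6%N => l - m
    | 6%N, 3%N => - (l - m)
    | 4%N, 5%N => - m
    | 5%N, 4%N => m
    | _, _ => 0
    end.

Definition associative_plane (k : nat) (S : 'M[R]_(k, 7)) : Prop :=
  \rank S = 3%N /\
  forall u v : 'rV[R]_7, (u <= S)%MS -> (v <= S)%MS -> (cross7 u v <= S)%MS.

Definition span356 (B : 'M[R]_7) : 'M[R]_(3, 7) :=
  col_mx (fv B 3) (col_mx (fv B 5) (fv B 6)).

End G2.

(* An element X of g2 is skew, hence singular in dimension 7, and G2 moves a unit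
   kernel vector to e3.  Then X commutes with J = e3 x _, so it is complex linear on
   the orthogonal complement of e3, a copy of C^3; a complex eigenvector has an
   imaginary eigenvalue because X is skew, which gives a real w with X w = b J w, and
   the stabilizer SU(3) of e3 moves w to e4.  The same argument on span(e1, e2, e5, e6),
   a copy of C^2, produces e1 with X e1 = b' e2, and the derivation rule
   X (u x v) = X u x v + u x X v then determines X: it is the two-parameter normal form.
   The Weyl group of G2 permutes up to sign its three rotation angles l, l - m, m,
   which can thus be sorted to 0 <= m <= l - m; the kernel and rank are then read off.
   All the elements of G2 used are products of simultaneous rotations in two coordinate
   planes, whose membership in G2 is a finite computation. *)

From HB Require Import structures.
From mathcomp Require Import all_boot all_order all_algebra.
From mathcomp Require Import ring lra zify complex.
Import Order.TTheory GRing.Theory Num.Theory.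
Local Open Scope ring_scope.
Set Implicit Arguments. Unset Strict Implicit. Unset Printing Implicit Defensive.

(* Ordinals are 0-based, whereas the names e1, ..., e7 in lemma names follow the
   paper: e_k is [stdb R i(k-1)]. *)
Notation i0 := (@Ordinal 7 0 isT).
Notation i1 := (@Ordinal 7 1 isT).
Notation i2 := (@Ordinal 7 2 isT).
Notation i3 := (@Ordinal 7 3 isT).
Notation i4 := (@Ordinal 7 4 isT).
Notation i5 := (@Ordinal 7 5 isT).
Notation i6 := (@Ordinal 7 6 isT).

Lemma ord7_cases (P : 'I_7 -> Prop) :
  P i0 -> P i1 -> P i2 -> P i3 -> P i4 -> P i5 -> P i6 -> forall k, P k.
Proof.
move=> H0 H1 H2 H3 H4 H5 H6 [m hm].
by case: m hm => [|[|[|[|[|[|[|//]]]]]]] hm; rewrite (bool_irrelevance hm isT).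
Qed.

Ltac ord7_case k := move: k; apply: ord7_cases => /=.

Lemma rank_rowsub_orthogonal (F : fieldType) n k (f : 'I_k -> 'I_n) (A : 'M[F]_n) :
  injective f -> A *m A^T = 1%:M -> \rank (rowsub f A) = k.
Proof.
move=> f_inj oA; have o1 : rowsub f A *m (rowsub f A)^T = 1%:M.
  have -> : (rowsub f A)^T = colsub f A^T by apply/matrixP => i j; rewrite !mxE.
  by rewrite -mxsub_mul oA; apply/matrixP => i j; rewrite !mxE (inj_eq f_inj).
by apply/eqP; rewrite eqn_leq rank_leq_row -{1}(mxrank1 F k) -o1 mxrankM_maxl.
Qed.

Section G2NormalForm.
Variable R : rcfType.
Implicit Types (u v w x y : 'rV[R]_7) (M N g h B : 'M[R]_7).
Local Notation e := (stdb R).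
Local Notation J := (cross7 (stdb R i2)).
Local Notation NF := (@g2_normal_form R).

(** * Coordinates and the octonionic cross product *)

Lemma sum7 (F : 'I_7 -> R) :
  \sum_(i < 7) F i = F i0 + F i1 + F i2 + F i3 + F i4 + F i5 + F i6.
Proof.
by rewrite !big_ord_recr big_ord0 /= add0r; repeat congr (_ + _); congr F; apply/val_inj.
Qed.

Lemma mulmx7E m n (M : 'M[R]_(m, 7)) (N : 'M[R]_(7, n)) i j : (M *m N) i j =
  M i i0 * N i0 j + M i i1 * N i1 j + M i i2 * N i2 j + M i i3 * N i3 j
  + M i i4 * N i4 j + M i i5 * N i5 j + M i i6 * N i6 j.
Proof. by rewrite mxE sum7. Qed.

Lemma stdbE k l : e k 0 l = (k == l)%:R.
Proof. by rewrite /stdb mxE eq_sym. Qed.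

Lemma row_stdb N k c : (e k *m N) 0 c = N k c.
Proof. by rewrite -rowE mxE. Qed.

Lemma dot7E u w : dot7 u w = u 0 i0 * w 0 i0 + u 0 i1 * w 0 i1 + u 0 i2 * w 0 i2
  + u 0 i3 * w 0 i3 + u 0 i4 * w 0 i4 + u 0 i5 * w 0 i5 + u 0 i6 * w 0 i6.
Proof. by rewrite /dot7 sum7. Qed.

Lemma dot7_mx u w : dot7 u w = (u *m w^T) 0 0.
Proof. by rewrite mxE; apply: eq_bigr => i _; rewrite mxE. Qed.

Definition crossf (f g : 'I_7 -> R) (k : nat) : R :=
  match k with
  | 0%N => (f i1 * g i2 - f i2 * g i1) + (f i3 * g i4 - f i4 * g i3) - (f i5 * g i6 - f i6 * g i5)
  | 1%N => - (f i0 * g i2 - f i2 * g i0) + (f i3 * g i5 - f i5 * g i3) + (f i4 * g i6 - f i6 * g i4)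
  | 2%N => (f i0 * g i1 - f i1 * g i0) + (f i3 * g i6 - f i6 * g i3) - (f i4 * g i5 - f i5 * g i4)
  | 3%N => - (f i0 * g i4 - f i4 * g i0) - (f i1 * g i5 - f i5 * g i1) - (f i2 * g i6 - f i6 * g i2)
  | 4%N => (f i0 * g i3 - f i3 * g i0) - (f i1 * g i6 - f i6 * g i1) + (f i2 * g i5 - f i5 * g i2)
  | 5%N => (f i0 * g i6 - f i6 * g i0) + (f i1 * g i3 - f i3 * g i1) - (f i2 * g i4 - f i4 * g i2)
  | _ => - (f i0 * g i5 - f i5 * g i0) + (f i1 * g i4 - f i4 * g i1) + (f i2 * g i3 - f i3 * g i2)
  end.

Lemma cross7E u w (k : 'I_7) : cross7 u w 0 k = crossf (u 0) (w 0) k.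
Proof.
have inordE n (h : (n < 7)%N) : (inord n : 'I_7) = Ordinal h by apply/val_inj; rewrite /= inordK.
rewrite /cross7 /phi7 /e3form /coord7 /stdb mxE /= !(inordE 0%N isT) !(inordE 1%N isT)
  !(inordE 2%N isT) !(inordE 3%N isT) !(inordE 4%N isT) !(inordE 5%N isT) !(inordE 6%N isT).
move: k; apply: ord7_cases; rewrite !mxE /= /crossf; ring.
Qed.

Ltac cross_ext :=
  apply/rowP; apply: ord7_cases; rewrite !(cross7E, mxE) /crossf /= ?(mxE, stdbE) /=; ring.

Lemma cross0l w : cross7 0 w = 0.
Proof. by cross_ext. Qed.

Lemma crossDr u w w' : cross7 u (w + w') = cross7 u w + cross7 u w'.
Proof. by cross_ext. Qed.

Lemma crossZr (a : R) u w : cross7 u (a *: w) = a *: cross7 u w.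
Proof. by cross_ext. Qed.

Lemma crossZl (a : R) u w : cross7 (a *: u) w = a *: cross7 u w.
Proof. by cross_ext. Qed.

Lemma cross0r u : cross7 u 0 = 0.
Proof. by rewrite -(scale0r 0) crossZr !scale0r. Qed.

Lemma cross_sumr u I (r : seq I) (F : I -> 'rV[R]_7) :
  cross7 u (\sum_(i <- r) F i) = \sum_(i <- r) cross7 u (F i).
Proof. exact: (big_morph _ (crossDr u) (cross0r u)). Qed.

Lemma cross_e3e1 : J (e i0) = e i1. Proof. by cross_ext. Qed.
Lemma cross_e3e4 : J (e i3) = e i6. Proof. by cross_ext. Qed.
Lemma cross_e3e6 : J (e i5) = e i4. Proof. by cross_ext. Qed.
Lemma cross_e3e2 : J (e i1) = - e i0. Proof. by cross_ext. Qed.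
Lemma cross_e3e7 : J (e i6) = - e i3. Proof. by cross_ext. Qed.
Lemma cross_e3e5 : J (e i4) = - e i5. Proof. by cross_ext. Qed.
Lemma cross_e1e2 : cross7 (e i0) (e i1) = e i2. Proof. by cross_ext. Qed.
Lemma cross_e1e4 : cross7 (e i0) (e i3) = e i4. Proof. by cross_ext. Qed.
Lemma cross_e2e4 : cross7 (e i1) (e i3) = e i5. Proof. by cross_ext. Qed.
Lemma cross_e1e7 : cross7 (e i0) (e i6) = e i5. Proof. by cross_ext. Qed.
Lemma cross_e2e7 : cross7 (e i1) (e i6) = - e i4. Proof. by cross_ext. Qed.

Lemma dot_cross_self u : dot7 (J u) u = 0.
Proof. by rewrite dot7E !cross7E /crossf /= !stdbE /=; ring. Qed.

Lemma dot7_linear (a b : R) u v x : dot7 (a *: u + b *: v) x = a * dot7 u x + b * dot7 v x.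
Proof. by rewrite !dot7E !mxE; ring. Qed.

(** * The group G2 and conjugation *)

Definition is_G2 g : Prop :=
  [/\ g *m g^T = 1%:M, \det g = 1 & forall u w, cross7 (u *m g) (w *m g) = cross7 u w *m g].

Lemma is_G2_1 : is_G2 1%:M.
Proof. by split; [rewrite trmx1 mulmx1 | exact: det1 | move=> u w; rewrite !mulmx1]. Qed.

Lemma is_G2_mul g h : is_G2 g -> is_G2 h -> is_G2 (g *m h).
Proof.
move=> [og dg cg] [oh dh ch]; split.
- by rewrite trmx_mul mulmxA -(mulmxA g) oh mulmx1 og.
- by rewrite det_mulmx dg dh mulr1.
- by move=> u w; rewrite !mulmxA ch cg.
Qed.

Lemma is_G2_trV g : is_G2 g -> g^T *m g = 1%:M.
Proof. by case=> og _ _; exact: mulmx1C. Qed.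

Lemma is_G2_tr g : is_G2 g -> is_G2 g^T.
Proof.
move=> hg; have [og dg cg] := hg; have og' := is_G2_trV hg; split.
- by rewrite trmxK.
- by rewrite det_tr.
- move=> u w; have := cg (u *m g^T) (w *m g^T); rewrite -!mulmxA og' !mulmx1 => ->.
  by rewrite -mulmxA og mulmx1.
Qed.

Lemma is_G2_dot g u : is_G2 g -> dot7 (u *m g) (u *m g) = dot7 u u.
Proof. by case=> og _ _; rewrite !dot7_mx trmx_mul !mulmxA -(mulmxA u) og mulmx1. Qed.

Lemma in_g2_conj N g : in_g2 N -> is_G2 g -> in_g2 (g *m N *m g^T).
Proof.
move=> [sk dN] hg; have [og _ cg] := hg; have [_ _ cgt] := is_G2_tr hg; split.
- by rewrite /skew7 !trmx_mul trmxK sk mulNmx mulmxN mulmxA.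
- by move=> v w; rewrite !mulmxA -cg dN mulmxDl -!cgt -!mulmxA og !mulmx1 !mulmxA.
Qed.

Definition G2_conj N N' : Prop := exists2 g, is_G2 g & N' = g *m N *m g^T.

Lemma G2_conj_refl N : G2_conj N N.
Proof. by exists 1%:M; [exact: is_G2_1 | rewrite trmx1 mul1mx mulmx1]. Qed.

Lemma G2_conj_trans N1 N2 N3 : G2_conj N1 N2 -> G2_conj N2 N3 -> G2_conj N1 N3.
Proof.
move=> [g hg ->] [h hh ->]; exists (h *m g); first exact: is_G2_mul.
by rewrite trmx_mul !mulmxA.
Qed.

Lemma G2_conj_trC N g : is_G2 g -> G2_conj N (g^T *m N *m g).
Proof. by move=> hg; exists g^T; [exact: is_G2_tr | rewrite trmxK]. Qed.

Lemma G2_conj_g2 N N' : in_g2 N -> G2_conj N N' -> in_g2 N'.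
Proof. by move=> hN [g hg ->]; exact: in_g2_conj. Qed.

Lemma G2_conj_row N H x : is_G2 H -> (x *m H) *m (H^T *m N *m H) = (x *m N) *m H.
Proof. by case=> og _ _; rewrite !mulmxA -(mulmxA x H) og mulmx1. Qed.

Lemma J_stab_e3 H x : is_G2 H -> e i2 *m H = e i2 -> J x *m H = J (x *m H).
Proof. by case=> _ _ cH fixH; rewrite -cH fixH. Qed.

Lemma G2_conj_intertwine W N N' : is_G2 W -> W *m N = N' *m W -> G2_conj N N'.
Proof. by move=> hW WN; exists W => //; case: hW => og _ _; rewrite WN -mulmxA og mulmx1. Qed.

(** * Simultaneous rotations in two planes *)

(* [g2_rot P c s] rotates the two coordinate planes named by [P] at once, by the
   angle with cosine [c] and sine [s] in the first plane and by the same angle,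
   or its opposite when [g2_plane_sign P = -1], in the second one; for these seven
   pairs of planes the result lies in G2. *)
Inductive g2_plane := P12_56 | P47_56 | P14_27 | P45_67 | P34_16 | P12_47 | P15_26.

Definition g2_plane_idx (P : g2_plane) : nat * nat * nat * nat :=
  match P with
  | P12_56 => (0, 1, 4, 5) | P47_56 => (3, 6, 4, 5) | P14_27 => (0, 3, 1, 6)
  | P45_67 => (3, 4, 5, 6) | P34_16 => (2, 3, 0, 5) | P12_47 => (0, 1, 3, 6)
  | P15_26 => (0, 4, 1, 5)
  end%N.

Definition g2_plane_sign (P : g2_plane) : R :=
  if P is (P12_47 | P15_26) then -1 else 1.

Definition g2_rotf P (c s : R) (k l : nat) : R :=
  let: (i, j, a, b) := g2_plane_idx P in let sg := g2_plane_sign P in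
  if k == l then (if [|| k == i, k == j, k == a | k == b] then c else 1)
  else if (k == i) && (l == j) then s
  else if (k == j) && (l == i) then - s
  else if (k == a) && (l == b) then sg * s
  else if (k == b) && (l == a) then - (sg * s) else 0.

Definition g2_rot P (c s : R) : 'M[R]_7 := \matrix_(k, l) g2_rotf P c s k l.

Lemma g2_rotE P c s k l : g2_rot P c s k l = g2_rotf P c s k l.
Proof. by rewrite mxE. Qed.

Lemma g2_rot_mul P c1 s1 c2 s2 :
  g2_rot P c1 s1 *m g2_rot P c2 s2 = g2_rot P (c1 * c2 - s1 * s2) (s1 * c2 + c1 * s2).
Proof.
apply/matrixP => k l; rewrite mulmx7E !g2_rotE.
by case: P; ord7_case k; ord7_case l; rewrite /g2_rotf /=; ring.
Qed.

Lemma g2_rot_tr P c s : (g2_rot P c s)^T = g2_rot P c (- s).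
Proof.
apply/matrixP => k l; rewrite mxE !g2_rotE.
by case: P; ord7_case k; ord7_case l; rewrite /g2_rotf /=; ring.
Qed.

Lemma g2_rot10 P : g2_rot P 1 0 = 1%:M.
Proof.
apply/matrixP => k l; rewrite g2_rotE mxE.
by case: P; ord7_case k; ord7_case l; rewrite /g2_rotf /= ?(mulr0, oppr0).
Qed.

Lemma g2_rot_cross P c s u w :
  c ^+ 2 + s ^+ 2 = 1 ->
  cross7 (u *m g2_rot P c s) (w *m g2_rot P c s) = cross7 u w *m g2_rot P c s.
Proof.
move=> h; have {}h : s ^+ 2 = 1 - c ^+ 2 by lra.
apply/rowP => k; rewrite mulmx7E !cross7E /crossf !mulmx7E !g2_rotE.
by case: P; ord7_case k; rewrite /g2_rotf /=; ring: h.
Qed.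

Lemma half_angle (c s : R) : c ^+ 2 + s ^+ 2 = 1 ->
  exists c' s', c = c' ^+ 2 - s' ^+ 2 /\ s = 2 * c' * s'.
Proof.
move=> h; have [c_1|hc] := eqVneq c (-1).
  have /eqP : s ^+ 2 = 0 by rewrite c_1 in h; nra.
  by rewrite sqrf_eq0 c_1 => /eqP ->; exists 0, 1; split; ring.
have hc1 : 0 < 1 + c.
  have : -1 <= c by nra.
  by rewrite le_eqVlt eq_sym (negbTE hc) /=; lra.
set c' := Num.sqrt ((1 + c) / 2).
have hc'2 : c' ^+ 2 = (1 + c) / 2 by rewrite sqr_sqrtr //; apply: divr_ge0; lra.
have hc'0 : c' != 0 by apply/eqP => e0; move: hc'2; rewrite e0 expr0n /=; lra.
exists c', (s / (2 * c')); split; last by field.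
have -> : (s / (2 * c')) ^+ 2 = s ^+ 2 / (4 * c' ^+ 2) by field.
have -> : s ^+ 2 = 1 - c ^+ 2 by lra.
by rewrite hc'2; field; lra.
Qed.

Lemma det_orthogonal_square g h : g *m g^T = 1%:M -> g = h *m h -> \det g = 1.
Proof.
move=> og gh.
have h1 : \det g * \det g = 1 by rewrite -{2}det_tr -det_mulmx og det1.
have h2 : 0 <= \det g by rewrite gh det_mulmx; nra.
nra.
Qed.

Lemma g2_rot_G2 P c s : c ^+ 2 + s ^+ 2 = 1 -> is_G2 (g2_rot P c s).
Proof.
move=> h; have og : g2_rot P c s *m (g2_rot P c s)^T = 1%:M.
  have h' : s ^+ 2 = 1 - c ^+ 2 by lra.
  by rewrite g2_rot_tr g2_rot_mul -(g2_rot10 P); congr g2_rot; ring: h'.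
split=> // [|u w]; last exact: g2_rot_cross.
have [c' [s' [ec es]]] := half_angle h.
apply: (det_orthogonal_square (h := g2_rot P c' s') og).
by rewrite g2_rot_mul ec es; congr g2_rot; ring.
Qed.

(** * Transitivity of G2 and of the stabilizer of e3 *)

Lemma givens_rotation (x y : R) : exists c s,
  [/\ c ^+ 2 + s ^+ 2 = 1, c * y - s * x = 0 & c * x + s * y = Num.sqrt (x ^+ 2 + y ^+ 2)].
Proof.
have [h|h] := eqVneq (x ^+ 2 + y ^+ 2) 0.
  have [hx hy] : x = 0 /\ y = 0 by split; nra.
  by exists 1, 0; rewrite h sqrtr0 hx hy; split; ring.
have hp : 0 < x ^+ 2 + y ^+ 2 by rewrite lt_def h /=; nra.
set r := Num.sqrt (x ^+ 2 + y ^+ 2).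
have hr : 0 < r by rewrite sqrtr_gt0.
have hr2 : r ^+ 2 = x ^+ 2 + y ^+ 2 by rewrite sqr_sqrtr // ltW.
exists (x / r), (y / r); split.
- have -> : (x / r) ^+ 2 + (y / r) ^+ 2 = (x ^+ 2 + y ^+ 2) / r ^+ 2 by field; lra.
  by rewrite hr2 divff //; apply/eqP; lra.
- by field; lra.
- have -> : x / r * x + y / r * y = r ^+ 2 / r by rewrite hr2; field; lra.
  by field; lra.
Qed.

Lemma g2_rot_fix_e3 P c s : P <> P34_16 -> e i2 *m g2_rot P c s = e i2.
Proof.
move=> hP; apply/rowP => k; rewrite mulmx7E !g2_rotE !stdbE.
by case: P hP => // _; ord7_case k; rewrite /g2_rotf /=; ring.
Qed.

Ltac g2_rot_coord := rewrite mulmx7E !g2_rotE /g2_rotf /=.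

(* Five rotations in the stabilizer SU(3) of e3, each one killing a coordinate. *)
Lemma stab_e3_into_span_e3e4 u : exists H t,
  [/\ is_G2 H, e i2 *m H = e i2, 0 <= t & u *m H = u 0 i2 *: e i2 + t *: e i3].
Proof.
have [c1 [s1 [h1 z1 _]]] := givens_rotation (u 0 i0) (u 0 i1).
set u1 := u *m g2_rot P12_56 c1 (- s1).
have f11 : u1 0 i1 = 0 by rewrite /u1; g2_rot_coord; lra.
have f12 : u1 0 i2 = u 0 i2 by rewrite /u1; g2_rot_coord; ring.
have [c2 [s2 [h2 z2 _]]] := givens_rotation (u1 0 i3) (u1 0 i6).
set u2 := u1 *m g2_rot P47_56 c2 (- s2).
have f21 : u2 0 i1 = 0 by rewrite /u2; g2_rot_coord; rewrite f11; ring.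
have f26 : u2 0 i6 = 0 by rewrite /u2; g2_rot_coord; lra.
have f22 : u2 0 i2 = u 0 i2 by rewrite /u2; g2_rot_coord; rewrite f12; ring.
have [c3 [s3 [h3 z3 _]]] := givens_rotation (u2 0 i3) (u2 0 i0).
set u3 := u2 *m g2_rot P14_27 c3 s3.
have f30 : u3 0 i0 = 0 by rewrite /u3; g2_rot_coord; lra.
have f31 : u3 0 i1 = 0 by rewrite /u3; g2_rot_coord; rewrite f21 f26; ring.
have f36 : u3 0 i6 = 0 by rewrite /u3; g2_rot_coord; rewrite f21 f26; ring.
have f32 : u3 0 i2 = u 0 i2 by rewrite /u3; g2_rot_coord; rewrite f22; ring.
have [c4 [s4 [h4 z4 _]]] := givens_rotation (u3 0 i4) (u3 0 i5).
set u4 := u3 *m g2_rot P12_56 c4 (- s4).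
have f40 : u4 0 i0 = 0 by rewrite /u4; g2_rot_coord; rewrite f30 f31; ring.
have f41 : u4 0 i1 = 0 by rewrite /u4; g2_rot_coord; rewrite f30 f31; ring.
have f45 : u4 0 i5 = 0 by rewrite /u4; g2_rot_coord; lra.
have f46 : u4 0 i6 = 0 by rewrite /u4; g2_rot_coord; rewrite f36; ring.
have f42 : u4 0 i2 = u 0 i2 by rewrite /u4; g2_rot_coord; rewrite f32; ring.
have [c5 [s5 [h5 z5 p5]]] := givens_rotation (u4 0 i3) (u4 0 i4).
set H := g2_rot P12_56 c1 (- s1) *m g2_rot P47_56 c2 (- s2) *m g2_rot P14_27 c3 s3
  *m g2_rot P12_56 c4 (- s4) *m g2_rot P45_67 c5 (- s5).
have uH : u *m H = u4 *m g2_rot P45_67 c5 (- s5) by rewrite /u4 /u3 /u2 /u1 !mulmxA.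
set t := c5 * u4 0 i3 + s5 * u4 0 i4.
exists H, t; split.
- by repeat apply: is_G2_mul; apply: g2_rot_G2; rewrite ?sqrrN.
- by rewrite !mulmxA !g2_rot_fix_e3.
- by rewrite /t p5 sqrtr_ge0.
apply/rowP => k; rewrite uH mulmx7E !g2_rotE ![in RHS]mxE /g2_rotf; ord7_case k;
  rewrite ?f40 ?f41 ?f42 ?f45 ?f46; [ring | ring | ring | rewrite /t; ring | lra | ring | ring].
Qed.

Lemma dot_span_e3e4 a t : dot7 (a *: e i2 + t *: e i3) (a *: e i2 + t *: e i3) = a ^+ 2 + t ^+ 2.
Proof. by rewrite dot7E !mxE /=; ring. Qed.

Lemma G2_transitive_sphere v : dot7 v v = 1 -> exists2 G, is_G2 G & v *m G = e i2.
Proof.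
move=> hv; have [H [t [hH _ _ vH]]] := stab_e3_into_span_e3e4 v.
have ht : v 0 i2 ^+ 2 + t ^+ 2 = 1 by rewrite -dot_span_e3e4 -vH is_G2_dot.
have [c [s [hcs z]]] := givens_rotation (v 0 i2) t; rewrite ht sqrtr1 => p.
exists (H *m g2_rot P34_16 c (- s)).
  by apply: is_G2_mul => //; apply: g2_rot_G2; rewrite sqrrN.
by rewrite mulmxA vH; apply/rowP => k; rewrite mulmx7E !mxE /g2_rotf; ord7_case k; lra.
Qed.

Lemma stab_e3_transitive w : dot7 w w = 1 -> w 0 i2 = 0 ->
  exists H, [/\ is_G2 H, e i2 *m H = e i2 & w *m H = e i3].
Proof.
move=> hw w2; have [H [t [hH fixH t0 wH]]] := stab_e3_into_span_e3e4 w.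
have ht : t ^+ 2 = 1 by rewrite -hw -(is_G2_dot _ hH) wH w2 dot_span_e3e4; ring.
have t1 : t = 1 by nra.
by exists H; split; rewrite // wH w2 t1 scale0r add0r scale1r.
Qed.

Lemma g2_rot_span_e4e7 P c s a b : P = P47_56 \/ P = P12_47 ->
  exists a' b', (a *: e i3 + b *: e i6) *m g2_rot P c s = a' *: e i3 + b' *: e i6.
Proof.
case=> ->; [exists (a * c - b * s), (a * s + b * c) | exists (a * c + b * s), (b * c - a * s)];
  by apply/rowP => k; rewrite mulmx7E !mxE /g2_rotf; ord7_case k; ring.
Qed.

Lemma g2_rot_fix_e4 c s : e i3 *m g2_rot P15_26 c s = e i3.
Proof. by apply/rowP => k; rewrite mulmx7E !mxE /g2_rotf; ord7_case k; ring. Qed.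

(* The rotations used here do not fix e4, only the plane span(e4, e7). *)
Lemma stab_e3_to_e1 u : dot7 u u = 1 -> u 0 i2 = 0 -> u 0 i3 = 0 -> u 0 i6 = 0 ->
  exists H, [/\ is_G2 H, e i2 *m H = e i2, u *m H = e i0 &
                exists a b, e i3 *m H^T = a *: e i3 + b *: e i6].
Proof.
move=> hu u2 u3 u6.
have [c1 [s1 [h1 z1 _]]] := givens_rotation (u 0 i0) (u 0 i1).
set x1 := u *m g2_rot P12_47 c1 (- s1).
have f11 : x1 0 i1 = 0 by rewrite /x1; g2_rot_coord; lra.
have f12 : x1 0 i2 = 0 by rewrite /x1; g2_rot_coord; rewrite u2; ring.
have f13 : x1 0 i3 = 0 by rewrite /x1; g2_rot_coord; rewrite u3 u6; ring.
have f16 : x1 0 i6 = 0 by rewrite /x1; g2_rot_coord; rewrite u3 u6; ring.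
have [c2 [s2 [h2 z2 _]]] := givens_rotation (x1 0 i4) (x1 0 i5).
set x2 := x1 *m g2_rot P47_56 c2 (- s2).
have f21 : x2 0 i1 = 0 by rewrite /x2; g2_rot_coord; rewrite f11; ring.
have f22 : x2 0 i2 = 0 by rewrite /x2; g2_rot_coord; rewrite f12; ring.
have f23 : x2 0 i3 = 0 by rewrite /x2; g2_rot_coord; rewrite f13 f16; ring.
have f25 : x2 0 i5 = 0 by rewrite /x2; g2_rot_coord; lra.
have f26 : x2 0 i6 = 0 by rewrite /x2; g2_rot_coord; rewrite f13 f16; ring.
have [c3 [s3 [h3 z3 p3]]] := givens_rotation (x2 0 i0) (x2 0 i4).
set H := g2_rot P12_47 c1 (- s1) *m g2_rot P47_56 c2 (- s2) *m g2_rot P15_26 c3 (- s3).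
have hH : is_G2 H by repeat apply: is_G2_mul; apply: g2_rot_G2; rewrite ?sqrrN.
exists H; split => //.
- by rewrite !mulmxA !g2_rot_fix_e3.
- have -> : u *m H = x2 *m g2_rot P15_26 c3 (- s3) by rewrite /x2 /x1 !mulmxA.
  set x3 := x2 *m _.
  have hd : dot7 x3 x3 = 1 by rewrite -hu -(is_G2_dot u hH) /x3 /x2 /x1 !mulmxA.
  have g1 : x3 0 i1 = 0 by rewrite /x3; g2_rot_coord; rewrite f21 f25; ring.
  have g2 : x3 0 i2 = 0 by rewrite /x3; g2_rot_coord; rewrite f22; ring.
  have g3 : x3 0 i3 = 0 by rewrite /x3; g2_rot_coord; rewrite f23; ring.
  have g4 : x3 0 i4 = 0 by rewrite /x3; g2_rot_coord; lra.
  have g5 : x3 0 i5 = 0 by rewrite /x3; g2_rot_coord; rewrite f21 f25; ring.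
  have g6 : x3 0 i6 = 0 by rewrite /x3; g2_rot_coord; rewrite f26; ring.
  have g0p : 0 <= x3 0 i0.
    have -> : x3 0 i0 = c3 * x2 0 i0 + s3 * x2 0 i4.
      by rewrite /x3; g2_rot_coord; rewrite f21 f25; ring.
    by rewrite p3 sqrtr_ge0.
  have g0 : x3 0 i0 = 1 by rewrite dot7E g1 g2 g3 g4 g5 g6 in hd; nra.
  by apply/rowP => k; rewrite stdbE; ord7_case k; rewrite ?g0 ?g1 ?g2 ?g3 ?g4 ?g5 ?g6.
- rewrite /H !trmx_mul !g2_rot_tr !mulmxA g2_rot_fix_e4.
  have [a [b ->]] : exists a b, e i3 *m g2_rot P47_56 c2 (- - s2) = a *: e i3 + b *: e i6.
    by have := g2_rot_span_e4e7 c2 (- - s2) 1 0 (or_introl erefl); rewrite scale1r scale0r addr0.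
  exact: g2_rot_span_e4e7 (or_intror erefl).
Qed.

(** * Complex eigenvectors *)

Lemma skew7_det N : skew7 N -> \det N = 0.
Proof.
move=> sk; have : \det N = - \det N.
  by rewrite -{1}det_tr sk -scaleN1r detZ -signr_odd /= expr1 mulN1r.
lra.
Qed.

Lemma dot7_gt0 u : u != 0 -> 0 < dot7 u u.
Proof.
move=> hu; rewrite dot7E ltNge; apply: contra hu => hle; apply/eqP/rowP.
by apply: ord7_cases; rewrite mxE; nra.
Qed.

Lemma normalize7 u : u != 0 -> exists a : R, dot7 (a *: u) (a *: u) = 1.
Proof.
move=> /dot7_gt0 hp; set r := Num.sqrt (dot7 u u).
have hr : 0 < r by rewrite sqrtr_gt0.
have hr2 : r ^+ 2 = dot7 u u by rewrite sqr_sqrtr // ltW.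
exists r^-1; have -> : dot7 (r^-1 *: u) (r^-1 *: u) = r^-1 ^+ 2 * dot7 u u.
  by rewrite !dot7E !mxE; ring.
by rewrite -hr2; field; lra.
Qed.

Lemma skew7_unit_kernel N : skew7 N -> exists v, dot7 v v = 1 /\ v *m N = 0.
Proof.
move=> /skew7_det/eqP/det0P [v /normalize7 [a ha] vN].
by exists (a *: v); rewrite -scalemxAl vN scaler0.
Qed.

Lemma skew7_dot N x : skew7 N -> dot7 (x *m N) x = 0.
Proof.
move=> sk; rewrite dot7_mx; set q := _ *m _.
have : q^T = - q by rewrite /q !trmx_mul trmxK sk mulNmx mulmxN mulmxA.
by move/matrixP/(_ 0 0); rewrite !mxE; lra.
Qed.

Lemma g2_commute_J N : in_g2 N -> e i2 *m N = 0 -> forall x, J x *m N = J (x *m N).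
Proof. by move=> [_ dN] e3N x; rewrite dN e3N cross0l add0r. Qed.

(* Through [re] and [im], R^n[i] is identified with a J-invariant subspace of R^7,
   [i] acting as [J]; [realify] is this identification and [cmat N] the complex matrix
   of the restriction of a J-linear [N]. *)
Section ComplexStructure.
Variables (n : nat) (re im : 'I_n -> 'I_7).
Hypotheses (re_inj : injective re) (im_inj : injective im) (re_neq_im : forall j k, re j != im k).
Hypotheses (J_re : forall j, J (e (re j)) = e (im j)) (J_im : forall j, J (e (im j)) = - e (re j)).

Definition realify (z : 'rV[R[i]]_n) : 'rV[R]_7 :=
  \sum_j (complex.Re (z 0 j) *: e (re j) + complex.Im (z 0 j) *: e (im j)).

Definition cmat N : 'M[R[i]]_n := \matrix_(j, k) (N (re j) (re k) +i* N (re j) (im k))%C.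

Lemma realify_re z k : realify z 0 (re k) = complex.Re (z 0 k).
Proof.
rewrite summxE (bigD1 k) //= big1 => [|j /negbTE jk].
  by rewrite !(stdbE, mxE) eqxx eq_sym (negbTE (re_neq_im k k)) mulr1 mulr0 !addr0.
by rewrite !(stdbE, mxE) (inj_eq re_inj) jk eq_sym (negbTE (re_neq_im _ _)) !mulr0 addr0.
Qed.

Lemma realify_im z k : realify z 0 (im k) = complex.Im (z 0 k).
Proof.
rewrite summxE (bigD1 k) //= big1 => [|j /negbTE jk].
  by rewrite !(stdbE, mxE) eqxx (negbTE (re_neq_im k k)) mulr1 mulr0 !add0r addr0.
by rewrite !(stdbE, mxE) (inj_eq im_inj) jk (negbTE (re_neq_im _ _)) !mulr0 addr0.
Qed.

Lemma realify_eq0 z : realify z = 0 -> z = 0.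
Proof.
move=> /rowP hz; apply/rowP => k; have := hz (re k); have := hz (im k).
by rewrite realify_re realify_im !mxE; case: (z 0 k) => a b /= -> ->.
Qed.

Lemma realify0 : realify 0 = 0.
Proof. by rewrite /realify big1 // => j _; rewrite mxE /= !scale0r addr0. Qed.

Lemma realifyD z1 z2 : realify (z1 + z2) = realify z1 + realify z2.
Proof.
rewrite /realify -big_split; apply: eq_bigr => j _; rewrite mxE.
by case: (z1 0 j) (z2 0 j) => [a b] [c d] /=; rewrite !scalerDl addrACA.
Qed.

Lemma realifyZ a z :
  realify (a *: z) = complex.Re a *: realify z + complex.Im a *: J (realify z).
Proof.
rewrite /realify cross_sumr !scaler_sumr -big_split; apply: eq_bigr => j _.
rewrite crossDr !crossZr J_re J_im mxE; case: a (z 0 j) => [a b] [c d] /=.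
by apply/rowP => k; rewrite !mxE; ring.
Qed.

Lemma realify_mul N z : (forall x, J x *m N = J (x *m N)) ->
  (forall j, e (re j) *m N = realify (row j (cmat N))) ->
  realify (z *m cmat N) = realify z *m N.
Proof.
move=> hJ hrow; rewrite mulmx_sum_row (big_morph _ realifyD realify0) [in RHS]/realify mulmx_suml.
by apply: eq_bigr => j _; rewrite realifyZ -hrow mulmxDl -!scalemxAl -J_re hJ.
Qed.

(* The real part of the eigenvalue vanishes because [N] is skew. *)
Lemma complex_eigenvector N : (0 < n)%N -> skew7 N ->
  (forall x, J x *m N = J (x *m N)) ->
  (forall j, e (re j) *m N = realify (row j (cmat N))) ->
  exists z (b : R), dot7 (realify z) (realify z) = 1 /\ realify z *m N = b *: J (realify z).
Proof.
move=> n_gt0 sk hJ hrow.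
have [a /eigenvalueP [z hz nz]] := Theorem7' (cmat N) n_gt0.
set w := realify z.
have wN : w *m N = complex.Re a *: w + complex.Im a *: J w.
  by rewrite -realify_mul // hz realifyZ.
have w0 : w != 0 by apply: contra nz => /eqP/realify_eq0 ->.
have Re0 : complex.Re a = 0.
  have := skew7_dot w sk; rewrite wN dot7_linear dot_cross_self mulr0 addr0 => /eqP.
  by rewrite mulf_eq0 (gt_eqF (dot7_gt0 w0)) orbF => /eqP.
have [k hk] := normalize7 w0.
exists (k%:C *: z)%C, (complex.Im a).
rewrite realifyZ /= scale0r addr0 -/w; split => //.
by rewrite -scalemxAl wN Re0 scale0r add0r crossZr !scalerA mulrC.
Qed.

End ComplexStructure.

Definition re3 (j : 'I_3) : 'I_7 := match val j with 0%N => i0 | 1%N => i3 | _ => i5 end.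
Definition im3 (j : 'I_3) : 'I_7 := match val j with 0%N => i1 | 1%N => i6 | _ => i4 end.

Lemma re3_inj : injective re3.
Proof. by move=> [[|[|[|//]]] ?] [[|[|[|//]]] ?] /(congr1 val) //= _; apply/val_inj. Qed.
Lemma im3_inj : injective im3.
Proof. by move=> [[|[|[|//]]] ?] [[|[|[|//]]] ?] /(congr1 val) //= _; apply/val_inj. Qed.
Lemma re3_neq_im3 j k : re3 j != im3 k.
Proof. by case: j k => [[|[|[|//]]] ?] [[|[|[|//]]] ?]. Qed.

Lemma J_re3 j : J (e (re3 j)) = e (im3 j).
Proof. by case: j => [[|[|[|//]]] ?] /=; rewrite ?(cross_e3e1, cross_e3e4, cross_e3e6). Qed.

Lemma J_im3 j : J (e (im3 j)) = - e (re3 j).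
Proof. by case: j => [[|[|[|//]]] ?] /=; rewrite ?(cross_e3e2, cross_e3e7, cross_e3e5). Qed.

Lemma skew7_col N k c : skew7 N -> N c k = - (e k *m N) 0 c.
Proof. by move=> sk; rewrite row_stdb; have := congr1 (fun A : 'M_7 => A k c) sk; rewrite !mxE. Qed.

Lemma cmat3_rows N : skew7 N -> e i2 *m N = 0 ->
  forall j, e (re3 j) *m N = realify re3 im3 (row j (cmat re3 im3 N)).
Proof.
move=> sk e3N; have N_2 c : N c i2 = 0 by rewrite (skew7_col _ _ sk) e3N mxE oppr0.
case=> [[|[|[|//]]] ?]; apply/rowP => c; rewrite row_stdb /realify summxE !big_ord_recr big_ord0 /=;
  rewrite !(stdbE, mxE) /=; ord7_case c; rewrite ?N_2; ring.
Qed.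

Lemma g2_eigen_e3perp N : in_g2 N -> e i2 *m N = 0 ->
  exists w (b : R), [/\ dot7 w w = 1, w 0 i2 = 0 & w *m N = b *: J w].
Proof.
move=> hN e3N; have [sk _] := hN.
have [z [b [hz zN]]] := complex_eigenvector re3_inj im3_inj re3_neq_im3 J_re3 J_im3
  (isT : (0 < 3)%N) sk (g2_commute_J hN e3N) (cmat3_rows sk e3N).
exists (realify re3 im3 z), b; split => //.
by rewrite /realify summxE !big_ord_recr big_ord0 /= !(stdbE, mxE) /=; ring.
Qed.

Definition re2 (j : 'I_2) : 'I_7 := if val j is 0%N then i0 else i5.
Definition im2 (j : 'I_2) : 'I_7 := if val j is 0%N then i1 else i4.

Lemma re2_inj : injective re2.
Proof. by move=> [[|[|//]] ?] [[|[|//]] ?] /(congr1 val) //= _; apply/val_inj. Qed.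
Lemma im2_inj : injective im2.
Proof. by move=> [[|[|//]] ?] [[|[|//]] ?] /(congr1 val) //= _; apply/val_inj. Qed.
Lemma re2_neq_im2 j k : re2 j != im2 k.
Proof. by case: j k => [[|[|//]] ?] [[|[|//]] ?]. Qed.

Lemma J_re2 j : J (e (re2 j)) = e (im2 j).
Proof. by case: j => [[|[|//]] ?] /=; rewrite ?(cross_e3e1, cross_e3e6). Qed.

Lemma J_im2 j : J (e (im2 j)) = - e (re2 j).
Proof. by case: j => [[|[|//]] ?] /=; rewrite ?(cross_e3e2, cross_e3e5). Qed.

Lemma g2_e7_row N (b : R) : in_g2 N -> e i2 *m N = 0 -> e i3 *m N = b *: e i6 ->
  e i6 *m N = - b *: e i3.
Proof.
move=> hN e3N e4N.
by rewrite -cross_e3e4 g2_commute_J // e4N crossZr cross_e3e7 scalerN scaleNr.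
Qed.

Lemma cmat2_rows N (b : R) : in_g2 N -> e i2 *m N = 0 -> e i3 *m N = b *: e i6 ->
  forall j, e (re2 j) *m N = realify re2 im2 (row j (cmat re2 im2 N)).
Proof.
move=> hN e3N e4N; have [sk _] := hN.
have e7N := g2_e7_row hN e3N e4N.
have N_2 c : N c i2 = 0 by rewrite (skew7_col _ _ sk) e3N mxE oppr0.
have N_3 c : N c i3 = - (b * e i6 0 c) by rewrite (skew7_col _ _ sk) e4N mxE.
have N_6 c : N c i6 = b * e i3 0 c by rewrite (skew7_col _ _ sk) e7N mxE mulNr opprK.
case=> [[|[|//]] ?]; apply/rowP => c; rewrite row_stdb /realify summxE !big_ord_recr big_ord0 /=;
  rewrite !(stdbE, mxE) /=; ord7_case c; rewrite ?N_2 ?N_3 ?N_6 ?stdbE /=; ring.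
Qed.

Lemma g2_eigen_e1e2e5e6 N (b : R) : in_g2 N -> e i2 *m N = 0 -> e i3 *m N = b *: e i6 ->
  exists u (b' : R), [/\ dot7 u u = 1, u 0 i2 = 0, u 0 i3 = 0, u 0 i6 = 0 & u *m N = b' *: J u].
Proof.
move=> hN e3N e4N; have [sk _] := hN.
have [z [b' [hz zN]]] := complex_eigenvector re2_inj im2_inj re2_neq_im2 J_re2 J_im2
  (isT : (0 < 2)%N) sk (g2_commute_J hN e3N) (cmat2_rows hN e3N e4N).
exists (realify re2 im2 z), b'; split => //;
  by rewrite /realify summxE !big_ord_recr big_ord0 /= !(stdbE, mxE) /=; ring.
Qed.

(** * Reduction to the normal form *)

Lemma g2_rows_normal_form N (p q : R) : in_g2 N -> e i2 *m N = 0 ->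
  e i0 *m N = p *: e i1 -> e i3 *m N = q *: e i6 -> N = NF (- p) (- (p + q)).
Proof.
move=> hN e3N e1N e4N; have [_ dN] := hN; have hJ := g2_commute_J hN e3N.
have e2N : e i1 *m N = - p *: e i0.
  by rewrite -cross_e3e1 hJ e1N crossZr cross_e3e2 scalerN scaleNr.
have e7N := g2_e7_row hN e3N e4N.
have e5N : e i4 *m N = (p + q) *: e i5.
  by rewrite -cross_e1e4 dN e1N e4N crossZl crossZr cross_e2e4 cross_e1e7 scalerDl.
have e6N : e i5 *m N = - (p + q) *: e i4.
  rewrite -cross_e2e4 dN e2N e4N crossZl crossZr cross_e1e4 cross_e2e7.
  by apply/rowP => k; rewrite !mxE; ring.
apply/matrixP => i j; rewrite -[N i j]row_stdb.
by ord7_case i; rewrite ?e1N ?e2N ?e3N ?e4N ?e5N ?e6N ?e7N !(stdbE, mxE); ord7_case j; ring.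
Qed.

Lemma g2_span_e4e7 N (b a c : R) : in_g2 N -> e i2 *m N = 0 -> e i3 *m N = b *: e i6 ->
  (a *: e i3 + c *: e i6) *m N = b *: J (a *: e i3 + c *: e i6).
Proof.
move=> hN e3N e4N; rewrite mulmxDl -!scalemxAl e4N (g2_e7_row hN e3N e4N).
by rewrite crossDr !crossZr cross_e3e4 cross_e3e7; apply/rowP => k; rewrite !mxE; ring.
Qed.

Lemma g2_conj_kernel_e3 M : in_g2 M -> exists2 N, G2_conj M N & e i2 *m N = 0.
Proof.
move=> hM; have [sk _] := hM; have [v [hv vM]] := skew7_unit_kernel sk.
have [G hG vG] := G2_transitive_sphere hv.
by exists (G^T *m M *m G); [exact: G2_conj_trC | rewrite -vG G2_conj_row // vM mul0mx].
Qed.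

Lemma g2_conj_e4_e7 N : in_g2 N -> e i2 *m N = 0 -> exists (b : R) N',
  [/\ G2_conj N N', e i2 *m N' = 0 & e i3 *m N' = b *: e i6].
Proof.
move=> hN e3N; have [w [b [hw w2 wN]]] := g2_eigen_e3perp hN e3N.
have [H [hH fixH wH]] := stab_e3_transitive hw w2.
exists b, (H^T *m N *m H); split; first exact: G2_conj_trC.
  by rewrite -{1}fixH G2_conj_row // e3N mul0mx.
by rewrite -wH G2_conj_row // wN -scalemxAl J_stab_e3 // wH cross_e3e4.
Qed.

Lemma g2_conj_e1_e2 N (b : R) : in_g2 N -> e i2 *m N = 0 -> e i3 *m N = b *: e i6 ->
  exists (b' : R) N',
  [/\ G2_conj N N', e i2 *m N' = 0, e i0 *m N' = b' *: e i1 & e i3 *m N' = b *: e i6].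
Proof.
move=> hN e3N e4N; have [u [b' [hu u2 u3 u6 uN]]] := g2_eigen_e1e2e5e6 hN e3N e4N.
have [H [hH fixH uH [a [c yH]]]] := stab_e3_to_e1 hu u2 u3 u6.
have e4H : (a *: e i3 + c *: e i6) *m H = e i3 by rewrite -yH -mulmxA (is_G2_trV hH) mulmx1.
exists b', (H^T *m N *m H); split; first exact: G2_conj_trC.
- by rewrite -{1}fixH G2_conj_row // e3N mul0mx.
- by rewrite -uH G2_conj_row // uN -scalemxAl J_stab_e3 // uH cross_e3e1.
- rewrite -{1}e4H G2_conj_row // (g2_span_e4e7 _ _ hN e3N e4N).
  by rewrite -scalemxAl J_stab_e3 // e4H cross_e3e4.
Qed.

Lemma g2_conj_normal_form M : in_g2 M -> exists l m, G2_conj M (NF l m).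
Proof.
move=> hM; have [N1 hMN1 e3N1] := g2_conj_kernel_e3 hM.
have hN1 := G2_conj_g2 hM hMN1.
have [b [N2 [hN12 e3N2 e4N2]]] := g2_conj_e4_e7 hN1 e3N1.
have hN2 := G2_conj_g2 hN1 hN12.
have [b' [N3 [hN23 e3N3 e1N3 e4N3]]] := g2_conj_e1_e2 hN2 e3N2 e4N2.
exists (- b'), (- (b' + b)).
rewrite -(g2_rows_normal_form (G2_conj_g2 hN2 hN23) e3N3 e1N3 e4N3).
exact: G2_conj_trans hMN1 (G2_conj_trans hN12 hN23).
Qed.

(** * The Weyl group *)

Ltac weyl_check := let i := fresh "i" in let j := fresh "j" in
  apply/matrixP => i j; rewrite !mulmx7E !g2_rotE !mxE /g2_rotf; ord7_case i; ord7_case j; ring.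

Lemma weyl_C l m : G2_conj (NF l m) (NF (m - l) m).
Proof.
apply: (@G2_conj_intertwine (g2_rot P14_27 0 1)); first by apply: g2_rot_G2; ring.
by weyl_check.
Qed.

Lemma weyl_D l m : G2_conj (NF l m) (NF l (l - m)).
Proof.
apply: (@G2_conj_intertwine (g2_rot P45_67 0 1)); first by apply: g2_rot_G2; ring.
by weyl_check.
Qed.

Lemma weyl_G l m : G2_conj (NF l m) (NF (- m) (- l)).
Proof.
apply: (@G2_conj_intertwine (g2_rot P15_26 0 1)); first by apply: g2_rot_G2; ring.
by weyl_check.
Qed.

Lemma weyl_E l m : G2_conj (NF l m) (NF (- l) (- m)).
Proof.
apply: (@G2_conj_intertwine (g2_rot P34_16 (-1) 0)); first by apply: g2_rot_G2; ring.
by weyl_check.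
Qed.

(* [NF l m] rotates the planes (e1,e2), (e4,e7), (e5,e6) by l, l - m, m; the Weyl
   group of G2 permutes these three numbers up to sign, so they can be sorted. *)
Lemma weyl_sort l m : exists l' m', G2_conj (NF l m) (NF l' m') /\ 0 <= m' <= l' - m'.
Proof.
have [l1 [m1 [h1 o1]]] : exists l1 m1, G2_conj (NF l m) (NF l1 m1) /\ - l1 <= l1 - m1.
  case: (lerP (- l) (l - m)) => h; first by exists l, m; split => //; exact: G2_conj_refl.
  by exists (m - l), m; split; [exact: weyl_C | lra].
have [l2 [m2 [h2 o2 o2']]] : exists l2 m2,
    [/\ G2_conj (NF l m) (NF l2 m2), - l2 <= l2 - m2 & - l2 <= m2].
  case: (lerP (- l1) m1) => h; first by exists l1, m1.
  by exists (- m1), (- l1); split; [exact: G2_conj_trans h1 (weyl_G _ _) | lra | lra].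
have [l3 [m3 [h3 o3 o3']]] : exists l3 m3,
    [/\ G2_conj (NF l m) (NF l3 m3), - l3 <= m3 & m3 <= l3 - m3].
  case: (lerP m2 (l2 - m2)) => h; first by exists l2, m2.
  by exists l2, (l2 - m2); split; [exact: G2_conj_trans h2 (weyl_D _ _) | lra | lra].
case: (lerP 0 m3) => h; first by exists l3, m3; split => //; apply/andP.
exists (l3 - m3), (- m3); split; last by apply/andP; split; lra.
apply: G2_conj_trans h3 (G2_conj_trans (weyl_E _ _) _).
by have := weyl_C (- l3) (- m3); rewrite opprK addrC.
Qed.

(** * Frames, kernels and ranks *)

Lemma fv_stdb B n (h : (n < 7)%N) : fv B n.+1 = e (Ordinal h) *m B.
Proof. by rewrite /fv rowE /stdb; congr (delta_mx _ _ *m _); apply/val_inj; rewrite /= inordK. Qed.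

Lemma G2_adapted_of_G2 B : is_G2 B -> G2_adapted B.
Proof.
case=> og dB cB; split => [i j|]; last split.
- have := congr1 (fun A : 'M_7 => A i j) og; rewrite !mxE => <-.
  by apply: eq_bigr => k _; rewrite !mxE.
- by rewrite dB ltr01.
rewrite !(fv_stdb B (isT : (0 < 7)%N)) !(fv_stdb B (isT : (1 < 7)%N)) !(fv_stdb B (isT : (2 < 7)%N))
  !(fv_stdb B (isT : (3 < 7)%N)) !(fv_stdb B (isT : (4 < 7)%N)) !(fv_stdb B (isT : (5 < 7)%N))
  !(fv_stdb B (isT : (6 < 7)%N)).
by rewrite !cB cross_e1e2 cross_e1e4 cross_e2e4 cross_e3e4.
Qed.

Definition idx356 (j : 'I_3) : 'I_7 := match val j with 0%N => i2 | 1%N => i4 | _ => i5 end.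

Lemma idx356_inj : injective idx356.
Proof. by move=> [[|[|[|//]]] ?] [[|[|[|//]]] ?] /(congr1 val) //= _; apply/val_inj. Qed.

Lemma span356_rowsub B : span356 B = rowsub idx356 B.
Proof.
rewrite /span356 !(fv_stdb B (isT : (2 < 7)%N)) !(fv_stdb B (isT : (4 < 7)%N))
  !(fv_stdb B (isT : (5 < 7)%N)) -!rowE.
apply/matrixP => j k; rewrite [RHS]mxE; case: j => [[|[|[|//]]] hj].
- have -> : Ordinal hj = lshift (1 + 1) (0 : 'I_1) by apply/val_inj.
  by apply: etrans (col_mxEu _ _ _ _) _; rewrite mxE.
- have -> : Ordinal hj = rshift 1 (lshift 1 (0 : 'I_1)) by apply/val_inj.
  by apply: etrans (col_mxEd _ _ _ _) _; apply: etrans (col_mxEu _ _ _ _) _; rewrite mxE.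
- have -> : Ordinal hj = rshift 1 (rshift 1 (0 : 'I_1)) by apply/val_inj.
  by apply: etrans (col_mxEd _ _ _ _) _; apply: etrans (col_mxEd _ _ _ _) _; rewrite mxE.
Qed.

Lemma rank_span356 B : is_G2 B -> \rank (span356 B) = 3%N.
Proof. by case=> og _ _; rewrite span356_rowsub rank_rowsub_orthogonal //; exact: idx356_inj. Qed.

Lemma normal_form_row y l m : y *m NF l m =
  (l * y 0 i1) *: e i0 - (l * y 0 i0) *: e i1 - ((l - m) * y 0 i6) *: e i3
  + (m * y 0 i5) *: e i4 - (m * y 0 i4) *: e i5 + ((l - m) * y 0 i3) *: e i6.
Proof. by apply/rowP => k; rewrite mulmx7E !mxE; ord7_case k; ring. Qed.

Lemma G2_frame_kernel B M x : is_G2 B -> (x *m M = 0 <-> (x *m B^T) *m (B *m M *m B^T) = 0).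
Proof.
move=> hB; have oB := is_G2_trV hB; rewrite !mulmxA -(mulmxA x) oB mulmx1.
split=> [->|/(congr1 (mulmx^~ B))]; first by rewrite mul0mx.
by rewrite mul0mx -mulmxA oB mulmx1.
Qed.

Lemma normal_form_kernel y l m : y *m NF l m = 0 ->
  [/\ l * y 0 i0 = 0, l * y 0 i1 = 0, (l - m) * y 0 i3 = 0, (l - m) * y 0 i6 = 0
    & m * y 0 i4 = 0 /\ m * y 0 i5 = 0].
Proof.
rewrite normal_form_row => /rowP hy.
move: (hy i0) (hy i1) (hy i3) (hy i4) (hy i5) (hy i6); rewrite !mxE /= => c0 c1 c3 c4 c5 c6.
by split; [lra | lra | lra | lra | split; lra].
Qed.

Lemma normal_form_kernel_generic y l m : l != 0 -> m != 0 -> l != m ->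
  y *m NF l m = 0 -> y = y 0 i2 *: e i2.
Proof.
move=> hl hm; rewrite -subr_eq0 => hlm /normal_form_kernel [c0 c1 c3 c6 [c4 c5]].
have z_l k : l * y 0 k = 0 -> y 0 k = 0 by move=> h; apply: (mulfI hl); rewrite mulr0.
have z_lm k : (l - m) * y 0 k = 0 -> y 0 k = 0 by move=> h; apply: (mulfI hlm); rewrite mulr0.
have z_m k : m * y 0 k = 0 -> y 0 k = 0 by move=> h; apply: (mulfI hm); rewrite mulr0.
apply/rowP => k; rewrite !mxE; ord7_case k;
  rewrite ?(z_l _ c0) ?(z_l _ c1) ?(z_lm _ c3) ?(z_lm _ c6) ?(z_m _ c4) ?(z_m _ c5); ring.
Qed.

Lemma normal_form_kernel_degenerate y l : l != 0 ->
  y *m NF l 0 = 0 -> y = y 0 i2 *: e i2 + y 0 i4 *: e i4 + y 0 i5 *: e i5.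
Proof.
move=> hl /normal_form_kernel [c0 c1 c3 c6 _]; rewrite subr0 in c3 c6.
have z_l k : l * y 0 k = 0 -> y 0 k = 0 by move=> h; apply: (mulfI hl); rewrite mulr0.
apply/rowP => k; rewrite !mxE; ord7_case k;
  rewrite ?(z_l _ c0) ?(z_l _ c1) ?(z_l _ c3) ?(z_l _ c6); ring.
Qed.

Lemma G2_frame_kernel_generic B M l m : is_G2 B -> B *m M *m B^T = NF l m ->
  l != 0 -> m != 0 -> l != m -> \rank M = 6%N /\ (kermx M == fv B 3)%MS.
Proof.
move=> hB eM hl hm hlm; have oB := is_G2_trV hB; have [og _ _] := hB.
have fv3 : fv B 3 = e i2 *m B := fv_stdb B (isT : (2 < 7)%N).
have fv3_0 : fv B 3 != 0.
  apply/eqP => /(congr1 (mulmx^~ B^T)); rewrite fv3 -mulmxA og mulmx1 mul0mx.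
  by move/rowP/(_ i2); rewrite !mxE /= => /eqP; rewrite oner_eq0.
have hk : (kermx M == fv B 3)%MS.
  apply/andP; split.
    apply/rV_subP => v /sub_kermxP /(G2_frame_kernel _ _ hB).1; rewrite eM.
    move/(normal_form_kernel_generic hl hm hlm) => hv.
    by rewrite -[v]mulmx1 -oB mulmxA hv -scalemxAl -fv3 scalemx_sub.
  apply/sub_kermxP/(G2_frame_kernel _ _ hB).2; rewrite eM fv3 -(mulmxA _ B) og mulmx1.
  by apply/rowP => k; rewrite mulmx7E !mxE; ord7_case k; ring.
split=> //; have := mxrank_ker M; rewrite (eqmx_rank hk) rank_rV fv3_0.
by have := rank_leq_row M; lia.
Qed.

Lemma cross_span356 a b c a' b' c' :
  cross7 (a *: e i2 + b *: e i4 + c *: e i5) (a' *: e i2 + b' *: e i4 + c' *: e i5) =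
  (c * b' - b * c') *: e i2 + (a * c' - c * a') *: e i4 + (b * a' - a * b') *: e i5.
Proof. by apply/rowP => k; rewrite !(cross7E, mxE) /crossf /= !mxE /=; ord7_case k; ring. Qed.

Lemma span356_sub B a b c : ((a *: e i2 + b *: e i4 + c *: e i5) *m B <= span356 B)%MS.
Proof.
have rowS j : (e (idx356 j) *m B <= span356 B)%MS.
  by rewrite -rowE -row_rowsub -span356_rowsub row_sub.
rewrite !mulmxDl -!scalemxAl; repeat apply: addmx_sub; apply: scalemx_sub.
- exact: (rowS (@Ordinal 3 0 isT)).
- exact: (rowS (@Ordinal 3 1 isT)).
- exact: (rowS (@Ordinal 3 2 isT)).
Qed.

Lemma normal_form_kernel_span356 l a b c : (a *: e i2 + b *: e i4 + c *: e i5) *m NF l 0 = 0.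
Proof. by apply/rowP => k; rewrite mulmx7E !mxE; ord7_case k; ring. Qed.

Lemma G2_frame_kernel_degenerate B M l : is_G2 B -> B *m M *m B^T = NF l 0 -> l != 0 ->
  [/\ \rank M = 4%N, (kermx M == span356 B)%MS & associative_plane (span356 B)].
Proof.
move=> hB eM hl; have oB := is_G2_trV hB; have [og _ cB] := hB.
have kerP v : v *m M = 0 -> exists a b c, v = (a *: e i2 + b *: e i4 + c *: e i5) *m B.
  move=> /(G2_frame_kernel _ _ hB).1; rewrite eM => /(normal_form_kernel_degenerate hl) hv.
  exists ((v *m B^T) 0 i2), ((v *m B^T) 0 i4), ((v *m B^T) 0 i5).
  by rewrite -hv -mulmxA oB mulmx1.
have spanM a b c : ((a *: e i2 + b *: e i4 + c *: e i5) *m B) *m M = 0.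
  apply/(G2_frame_kernel _ _ hB).2.
  by rewrite eM -(mulmxA _ B) og mulmx1 normal_form_kernel_span356.
have hk : (kermx M == span356 B)%MS.
  apply/andP; split.
    by apply/rV_subP => v /sub_kermxP /kerP [a [b [c ->]]]; exact: span356_sub.
  rewrite span356_rowsub; apply/row_subP => j; apply/sub_kermxP; rewrite row_rowsub rowE.
  case: j => [[|[|[|//]]] ?] /=.
  - by have := spanM 1 0 0; rewrite scale1r !scale0r !addr0.
  - by have := spanM 0 1 0; rewrite scale1r !scale0r add0r addr0.
  - by have := spanM 0 0 1; rewrite scale1r !scale0r !add0r.
have rS := rank_span356 hB; split => //.
  by have := mxrank_ker M; rewrite (eqmx_rank hk) rS; have := rank_leq_row M; lia.
split=> // u w; rewrite -!(eqmxP hk) => /sub_kermxP/kerP [a [b [c ->]]].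
move=> /sub_kermxP/kerP [a' [b' [c' ->]]].
by rewrite cB cross_span356; apply/sub_kermxP; exact: spanM.
Qed.

Lemma normal_form00 : NF 0 0 = 0.
Proof.
by apply/matrixP => i j; rewrite !mxE; ord7_case i; ord7_case j; rewrite ?(oppr0, subr0).
Qed.

Lemma G2_frame_recover B M : is_G2 B -> M = B^T *m (B *m M *m B^T) *m B.
Proof. by move=> /is_G2_trV oB; rewrite !mulmxA oB mul1mx -mulmxA oB mulmx1. Qed.

End G2NormalForm.

Theorem theorem3p5 (R : rcfType) (M : 'M[R]_7) (HX : in_g2 M) :
  exists (B : 'M[R]_7) (l m : R),
    G2_adapted B /\ m <= l /\ 0 <= m /\
    mx_in_frame M B = g2_normal_form l m /\
    (l = m \/ (0 < l /\ m = 0) \/ (m < l /\ 0 < m)) /\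
    (l = m -> l = 0 /\ m = 0 /\ M = 0) /\
    (0 < l -> m = 0 ->
       \rank M = 4%N /\ (kermx M == span356 B)%MS /\
       associative_plane (span356 B)) /\
    (m < l -> 0 < m ->
       \rank M = 6%N /\ (kermx M == fv B 3)%MS).
Proof.
have [l0 [m0 hM0]] := g2_conj_normal_form HX.
have [l [m [hM1 /andP [m_ge0 m_le]]]] := weyl_sort l0 m0.
have [B hB eB] := G2_conj_trans hM0 hM1.
exists B, l, m; split; first exact: G2_adapted_of_G2.
split; first lra.
split; first lra.
split; first by rewrite /mx_in_frame eB.
split.
  have [m_le0|m_gt0] := lerP m 0; last by right; right; split; lra.
  by have [l_le0|l_gt0] := lerP l 0; [left | right; left; split]; lra.
split.
  move=> lm; have [l0' m0'] : l = 0 /\ m = 0 by split; lra.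
  by do 2 split => //; rewrite (G2_frame_recover M hB) -eB l0' m0' normal_form00 mulmx0 mul0mx.
split.
  move=> l_gt0 m0'; rewrite m0' in eB.
  by have [] := G2_frame_kernel_degenerate hB (esym eB) (lt0r_neq0 l_gt0).
move=> ml m_gt0; apply: G2_frame_kernel_generic hB (esym eB) _ (lt0r_neq0 m_gt0) _.
  by apply: lt0r_neq0; lra.
by rewrite eq_sym lt_eqF.
Qed.
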